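(* Let $T$ be a tree on $n$ vertices, let $v$ be a vertex of $T$, and let $\mathrm{SFS}(T,v)=(F_1,\dots,F_n)$. Then $$X_T=\sum_{i=1}^n p_i F_i.$$
   Context: For a graph $G$, a proper coloring is a map $\kappa: V(G)\to\mathbb{N}=\{1,2,\dots\}$ with $\kappa(u)\neq\kappa(w)$ whenever $uw\in E(G)$. With commuting indeterminates $x_1,x_2,\dots$, the chromatic symmetric function is $X_G=\sum_\kappa \prod_{u\in V(G)} x_{\kappa(u)}$ over all proper colorings $\kappa$ of $G$, and for a vertex $v$ and $c\in\mathbb{N}$, $Z_G^v(c)$ is the same sum restricted to proper colorings with $\kappa(v)=c$. The power-sum symmetric functions are $p_i=\sum_{j\ge1}x_j^i$. For a tree $T$ on $n$ vertices and a vertex $v$, the symmetric function sequence $\mathrm{SFS}(T,v)=(F_1,\dots,F_n)$ is the unique $n$-tuple of symmetric functions in $x_1,x_2,\dots$ such that $Z_T^v(c)=\sum_{i=1}^n x_c^iF_i$ for every $c\in\mathbb{N}$ (such a tuple exists and is unique). *)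

From HB Require Import structures.
From mathcomp Require Import all_boot all_order all_algebra.
From mathcomp Require Import mpoly.
Set Implicit Arguments. Unset Strict Implicit. Unset Printing Implicit Defensive.
Import GRing.Theory.
Local Open Scope ring_scope.

(* A finite simple graph on a finType T is given by a relation e.
   It is a tree iff e is symmetric, irreflexive, connected and has
   exactly #|T| - 1 (unordered) edges, i.e. 2(#|T|-1) ordered pairs. *)
Definition is_tree (T : finType) (e : rel T) : Prop :=
  [/\ ssrbool.symmetric e, irreflexive e,
      (forall x y : T, connect e x y) &
      #|[set p : T * T | e p.1 p.2]| = (2 * #|T|.-1)%N].

(* Proper colorings with colours in 'I_N (colour j <-> variable x_{j+1}). *)
Definition proper_col (T : finType) (e : rel T) (N : nat)
  (k : {ffun T -> 'I_N}) : bool :=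
  [forall u, forall w, e u w ==> (k u != k w)].

Definition chromX (R : comRingType) (T : finType) (e : rel T) (N : nat)
  : {mpoly R[N]} :=
  \sum_(k : {ffun T -> 'I_N} | proper_col e k) \prod_(u : T) 'X_(k u).

Definition chromZ (R : comRingType) (T : finType) (e : rel T) (v : T) (N : nat)
  (c : 'I_N) : {mpoly R[N]} :=
  \sum_(k : {ffun T -> 'I_N} | proper_col e k && (k v == c))
     \prod_(u : T) 'X_(k u).

Definition psum (R : comRingType) (N i : nat) : {mpoly R[N]} :=
  \sum_(j < N) 'X_j ^+ i.

From HB Require Import structures.
From mathcomp Require Import all_boot all_order all_algebra.
From mathcomp Require Import mpoly.
Import GRing.Theory.
Local Open Scope ring_scope.

Lemma chromX_sum_chromZ (R : comRingType) (T : finType) (e : rel T) (v : T)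
    (N : nat) :
  chromX R e N = \sum_(c < N) chromZ R e v c.
Proof.
by rewrite /chromX /chromZ (partition_big (fun k : {ffun T -> 'I_N} => k v) xpredT).
Qed.

(* F : 'I_n -> ... with F i playing the role of F_{i+1}. *)
Theorem corollary3p6 (R : comRingType) (T : finType) (e : rel T) (v : T)
  (N : nat) (F : 'I_#|T| -> {mpoly R[N]}) :
  is_tree e ->
  (forall i, F i \is symmetric) ->
  (forall c : 'I_N,
     chromZ R e v c = \sum_(i < #|T|) 'X_c ^+ i.+1 * F i) ->
  chromX R e N = \sum_(i < #|T|) psum R N i.+1 * F i.
Proof.
move=> _ _ chromZ_expansion.
rewrite (chromX_sum_chromZ R T e v).
under eq_bigr => c _ do rewrite chromZ_expansion.
rewrite exchange_big /=; apply: eq_bigr => i _.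
by rewrite /psum mulr_suml.
Qed.
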